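(* Let $(X,d)$ be a compact metric space and $f_{1,\infty}$ a commutative sequence of continuous self-maps of $X$. The following are equivalent: (1) $(X,f_{1,\infty})$ is weakly mixing; (2) $(\mathcal{K}(X),\overline{f}_{1,\infty})$ is weakly mixing; (3) $(\mathcal{K}(X),\overline{f}_{1,\infty})$ is topologically transitive.
   Context: Commutative: $f_i\circ f_j=f_j\circ f_i$ for all $i,j$. Write $f_1^n=f_n\circ\cdots\circ f_1$. $\mathcal{K}(X)$ is the hyperspace of non-empty compact subsets of $X$ with the Vietoris topology (equivalently the Hausdorff metric), and $\overline{f}_n(K)=f_n(K)$, so $\overline{f}_1^n(K)=f_1^n(K)$. A non-autonomous system $(Y,g_{1,\infty})$ is topologically transitive if for all non-empty open $U,V$ there is $n\in\mathbb{N}$ with $g_1^n(U)\cap V\ne\emptyset$, and weakly mixing if for all non-empty open $U_1,U_2,V_1,V_2$ there is $n\in\mathbb{N}$ with $g_1^n(U_i)\cap V_i\ne\emptyset$ for $i=1,2$. *)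

From Stdlib Require Import Reals List.
Open Scope R_scope.

Definition mopen (M : Metric_Space) (U : Base M -> Prop) : Prop :=
  forall x, U x -> exists eps, 0 < eps /\ forall y, dist M x y < eps -> U y.

Definition compact_set (M : Metric_Space) (K : Base M -> Prop) : Prop :=
  forall (I : Type) (U : I -> Base M -> Prop),
    (forall i, mopen M (U i)) ->
    (forall x, K x -> exists i, U i x) ->
    exists l : list I, forall x, K x -> exists i, In i l /\ U i x.

Definition compact_space (M : Metric_Space) : Prop :=
  compact_set M (fun _ => True).

Definition continuous_map (M : Metric_Space) (f : Base M -> Base M) : Prop :=
  forall x eps, 0 < eps -> exists delta, 0 < delta /\
    forall y, dist M x y < delta -> dist M (f x) (f y) < eps.

(* Elements of the hyperspace K(X): non-empty compact subsets. *)
Definition in_hyper (M : Metric_Space) (K : Base M -> Prop) : Prop :=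
  (exists x, K x) /\ compact_set M K.

(* Basic Vietoris open set <U_1,...,U_n> (the U_i given as a list). *)
Definition vietoris_basic (M : Metric_Space) (l : list (Base M -> Prop))
  (K : Base M -> Prop) : Prop :=
  in_hyper M K /\
  (forall x, K x -> exists U, In U l /\ U x) /\
  (forall U, In U l -> exists x, K x /\ U x).

Definition vietoris_open (M : Metric_Space)
  (UU : (Base M -> Prop) -> Prop) : Prop :=
  forall K, UU K -> exists l : list (Base M -> Prop),
    (forall U, In U l -> mopen M U) /\ vietoris_basic M l K /\
    (forall K', vietoris_basic M l K' -> UU K').

Definition image {A B : Type} (f : A -> B) (K : A -> Prop) : B -> Prop :=
  fun y => exists x, K x /\ f x = y.

(* Non-autonomous composition: g m stands for g_{m+1};
   comp_seq g n = g_n o ... o g_1 (identity for n = 0). *)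
Fixpoint comp_seq {Y : Type} (g : nat -> Y -> Y) (n : nat) : Y -> Y :=
  match n with
  | O => fun y => y
  | S m => fun y => g m (comp_seq g m y)
  end.

Definition top_transitive {Y : Type} (O : (Y -> Prop) -> Prop)
  (g : nat -> Y -> Y) : Prop :=
  forall U V, O U -> O V -> (exists y, U y) -> (exists y, V y) ->
    exists n, (1 <= n)%nat /\ exists y, U y /\ V (comp_seq g n y).

Definition weakly_mixing {Y : Type} (O : (Y -> Prop) -> Prop)
  (g : nat -> Y -> Y) : Prop :=
  forall U1 U2 V1 V2, O U1 -> O U2 -> O V1 -> O V2 ->
    (exists y, U1 y) -> (exists y, U2 y) -> (exists y, V1 y) -> (exists y, V2 y) ->
    exists n, (1 <= n)%nat /\
      (exists y, U1 y /\ V1 (comp_seq g n y)) /\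
      (exists y, U2 y /\ V2 (comp_seq g n y)).

Definition hyper_map {M : Metric_Space} (f : Base M -> Base M)
  : (Base M -> Prop) -> (Base M -> Prop) := image f.

(* Weak mixing of X gives, by induction and commutativity, a single time n
   at which every pair (U, V) from a finite family of non-empty open sets is
   hit, i.e. U meets the preimage of V under f_1^n.  Applied to all pairs of
   members of basic Vietoris sets <U_1,...,U_k> and <V_1,...,V_m>, the finite
   set of witnesses is a compact K in the first whose image lies in the
   second, so the hyperspace is weakly mixing, hence transitive.  Conversely,
   transitivity between <U> and <V_1, V_2> makes U hit both V_1 and V_2 at a
   common time, and commutativity upgrades this to weak mixing of X. *)
From Stdlib Require Import Reals List Lra FunctionalExtensionality PropExtensionality.

Section Hyperspace.
Variable M : Metric_Space.

Lemma mopen_inter (U V : Base M -> Prop) :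
  mopen M U -> mopen M V -> mopen M (fun x => U x /\ V x).
Proof.
  intros HU HV x [Ux Vx].
  destruct (HU _ Ux) as [e1 [He1 H1]], (HV _ Vx) as [e2 [He2 H2]].
  exists (Rmin e1 e2); split; [apply Rmin_glb_lt; auto |].
  intros y Hy. pose proof (Rmin_l e1 e2). pose proof (Rmin_r e1 e2).
  split; [apply H1 | apply H2]; lra.
Qed.

Lemma mopen_preimage (g : Base M -> Base M) (U : Base M -> Prop) :
  continuous_map M g -> mopen M U -> mopen M (fun x => U (g x)).
Proof.
  intros Hg HU x Hx. destruct (HU _ Hx) as [e [He H]].
  destruct (Hg x e He) as [d [Hd H2]]. exists d; split; auto.
Qed.

Lemma compact_set_finite (K : Base M -> Prop) (xs : list (Base M)) :
  (forall x, K x <-> In x xs) -> compact_set M K.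
Proof.
  intros HK I U _ Hcov.
  assert (Hfin : forall ys, (forall x, In x ys -> exists i, U i x) ->
            exists l : list I, forall x, In x ys -> exists i, In i l /\ U i x).
  { induction ys as [| a ys IH]; intros Hys.
    - exists nil; intros x [].
    - destruct (Hys a (or_introl eq_refl)) as [i Hi].
      destruct IH as [l Hl]; [intros x Hx; apply Hys; right; auto |].
      exists (i :: l). intros x [<- | Hx].
      + exists i; split; [left |]; auto.
      + destruct (Hl x Hx) as [j [Hj Uj]]. exists j; split; [right |]; auto. }
  destruct (Hfin xs) as [l Hl]; [intros x Hx; apply Hcov, HK, Hx |].
  exists l; intros x Kx; apply Hl, HK, Kx.
Qed.

Lemma vietoris_basic_finite (l : list (Base M -> Prop)) (K : Base M -> Prop)
    (xs : list (Base M)) :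
  (forall x, K x <-> In x xs) ->
  (exists x, K x) ->
  (forall x, K x -> exists U, In U l /\ U x) ->
  (forall U, In U l -> exists x, K x /\ U x) ->
  vietoris_basic M l K.
Proof.
  intros HK Hne Hsub Hhit. repeat split; auto.
  exact (compact_set_finite K xs HK).
Qed.

Lemma vietoris_open_basic (l : list (Base M -> Prop)) :
  (forall U, In U l -> mopen M U) -> vietoris_open M (vietoris_basic M l).
Proof. intros Hl K HK. exists l; auto. Qed.

Definition hits (g : Base M -> Base M) (U V : Base M -> Prop) : Prop :=
  exists x, U x /\ V (g x).

Lemma list_choice {A B : Type} (P : list A) (R : A -> B -> Prop) :
  (forall p, In p P -> exists x, R p x) ->
  exists xs : list B, (forall p, In p P -> exists x, In x xs /\ R p x) /\
    (forall x, In x xs -> exists p, In p P /\ R p x).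
Proof.
  induction P as [| a P IH]; intros H.
  - exists nil; split; [intros p [] | intros x []].
  - destruct (H a (or_introl eq_refl)) as [x0 Hx0].
    destruct IH as [xs [H1 H2]]; [intros p Hp; apply H; right; auto |].
    exists (x0 :: xs); split.
    + intros p [<- | Hp]; [exists x0; split; [left |]; auto |].
      destruct (H1 p Hp) as [x [Hx Rx]]; exists x; split; [right |]; auto.
    + intros x [<- | Hx]; [exists a; split; [left |]; auto |].
      destruct (H2 x Hx) as [p [Hp Rp]]; exists p; split; [right |]; auto.
Qed.

Lemma vietoris_basic_image_hits (g : Base M -> Base M)
    (lU lV : list (Base M -> Prop)) (U0 V0 : Base M -> Prop) :
  In U0 lU -> In V0 lV ->
  (forall U V, In U lU -> In V lV -> hits g U V) ->
  exists K, vietoris_basic M lU K /\ vietoris_basic M lV (image g K).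
Proof.
  intros HU0 HV0 Hhits.
  destruct (list_choice (list_prod lU lV) (fun p x => fst p x /\ snd p (g x)))
    as [xs [Hwit Hxs]].
  { intros [U V] Hp. apply in_prod_iff in Hp. apply Hhits; tauto. }
  assert (Hpair : forall U V, In U lU -> In V lV ->
            exists x, In x xs /\ U x /\ V (g x)).
  { intros U V HU HV. apply (Hwit (U, V)), in_prod_iff; auto. }
  destruct (Hpair U0 V0 HU0 HV0) as [x0 [Hx0 _]].
  exists (fun x => In x xs). split.
  - apply (vietoris_basic_finite _ _ xs); [tauto | exists x0; auto | |].
    + intros x Hx. destruct (Hxs x Hx) as [[U V] [Hp [Ux _]]].
      apply in_prod_iff in Hp. exists U; split; [apply Hp | auto].
    + intros U HU. destruct (Hpair U V0 HU HV0) as [x [Hx [Ux _]]].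
      exists x; auto.
  - apply (vietoris_basic_finite _ _ (map g xs)).
    + intros y. rewrite in_map_iff. unfold image. firstorder.
    + exists (g x0), x0; auto.
    + intros y [x [Hx <-]]. destruct (Hxs x Hx) as [[U V] [Hp [_ Vx]]].
      apply in_prod_iff in Hp. exists V; split; [apply Hp | auto].
    + intros V HV. destruct (Hpair U0 V HU0 HV) as [x [Hx [_ Vx]]].
      exists (g x); split; [exists x |]; auto.
Qed.

Variable f : nat -> Base M -> Base M.
Hypothesis f_continuous : forall i, continuous_map M (f i).
Hypothesis f_commute : forall i j x, f i (f j x) = f j (f i x).

Local Notation F := (comp_seq f).
Local Notation hyper_f := (fun i => hyper_map (f i)).

Lemma comp_seq_continuous n : continuous_map M (F n).
Proof.
  induction n as [| n IH]; intros x eps He; simpl.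
  - exists eps; split; auto.
  - destruct (f_continuous n (F n x) eps He) as [d1 [Hd1 H1]].
    destruct (IH x d1 Hd1) as [d2 [Hd2 H2]].
    exists d2; split; auto.
Qed.

Lemma comp_seq_commute_step m i x : f i (F m x) = F m (f i x).
Proof. induction m; simpl; [reflexivity |]. rewrite f_commute, IHm. reflexivity. Qed.

Lemma comp_seq_commute n m x : F n (F m x) = F m (F n x).
Proof.
  revert m x; induction n; intros m x; simpl; [reflexivity |].
  rewrite IHn, comp_seq_commute_step. reflexivity.
Qed.

Lemma comp_seq_hyper_map n K : comp_seq hyper_f n K = image (F n) K.
Proof.
  revert K; induction n as [| n IH]; intros K;
    apply functional_extensionality; intro y; apply propositional_extensionality;
    simpl; unfold image.
  - split; [intro Ky; exists y; auto | intros [x [Kx <-]]; exact Kx].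
  - rewrite IH. unfold hyper_map, image. split.
    + intros [z [[x [Kx <-]] <-]]. exists x; auto.
    + intros [x [Kx <-]]. exists (F n x); split; [exists x |]; auto.
Qed.

Definition nonempty_open (U : Base M -> Prop) : Prop :=
  mopen M U /\ exists x, U x.

Lemma nonempty_open_pullback (A C : Base M -> Prop) m :
  nonempty_open A -> mopen M C -> hits (F m) A C ->
  nonempty_open (fun x => A x /\ C (F m x)).
Proof.
  intros [HA _] HC [a Ha]. split; [| exists a; exact Ha].
  apply mopen_inter; [exact HA |].
  apply mopen_preimage; [apply comp_seq_continuous | exact HC].
Qed.

(* The pair (C, D) is absorbed into the pair (A, B) by pulling it back along a
   time n0 at which it is hit; commutativity moves F n0 past the later F n. *)
Lemma weakly_mixing_hits_list :
  weakly_mixing (mopen M) f ->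
  forall l : list ((Base M -> Prop) * (Base M -> Prop)),
  (forall p, In p l -> nonempty_open (fst p) /\ nonempty_open (snd p)) ->
  forall A B, nonempty_open A -> nonempty_open B ->
  exists n, (1 <= n)%nat /\ hits (F n) A B /\
    forall p, In p l -> hits (F n) (fst p) (snd p).
Proof.
  intros W l; induction l as [| [C D] l IH];
    intros Hl A B [HA nA] [HB nB].
  - destruct (W A A B B HA HA HB HB nA nA nB nB) as [n [Hn [Hab _]]].
    exists n; repeat split; auto. intros p [].
  - destruct (Hl (C, D) (or_introl eq_refl)) as [[HC nC] [HD nD]].
    destruct (W A B C D HA HB HC HD nA nB nC nD) as [n0 [_ [HAC HBD]]].
    destruct (IH (fun p Hp => Hl p (or_intror Hp))
                 (fun x => A x /\ C (F n0 x)) (fun x => B x /\ D (F n0 x)))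
      as [n [Hn [[x [[Ax Cx] [Bx Dx]]] Hrest]]];
      try (apply nonempty_open_pullback; auto; split; auto).
    exists n; repeat split; [auto | exists x; auto |].
    intros p [<- | Hp]; [| auto].
    exists (F n0 x); split; [exact Cx |]. simpl. rewrite comp_seq_commute. exact Dx.
Qed.

Lemma vietoris_basic_nonempty l K :
  vietoris_basic M l K -> exists U, In U l.
Proof. intros [[[x Kx] _] [Hcov _]]. destruct (Hcov x Kx) as [U [HU _]]; eauto. Qed.

Lemma vietoris_basic_nonempty_open l K U :
  (forall U, In U l -> mopen M U) -> vietoris_basic M l K -> In U l ->
  nonempty_open U.
Proof.
  intros Hl [_ [_ Hhit]] HU. split; [auto |].
  destruct (Hhit U HU) as [x [_ Ux]]; eauto.
Qed.

Lemma hyper_weakly_mixing :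
  weakly_mixing (mopen M) f -> weakly_mixing (vietoris_open M) hyper_f.
Proof.
  intros W UU1 UU2 VV1 VV2 HU1 HU2 HV1 HV2 [K1 K1U] [K2 K2U] [L1 L1V] [L2 L2V].
  destruct (HU1 K1 K1U) as [lU1 [oU1 [bU1 cU1]]].
  destruct (HU2 K2 K2U) as [lU2 [oU2 [bU2 cU2]]].
  destruct (HV1 L1 L1V) as [lV1 [oV1 [bV1 cV1]]].
  destruct (HV2 L2 L2V) as [lV2 [oV2 [bV2 cV2]]].
  destruct (vietoris_basic_nonempty _ _ bU1) as [U1 HU1'].
  destruct (vietoris_basic_nonempty _ _ bV1) as [V1 HV1'].
  destruct (vietoris_basic_nonempty _ _ bU2) as [U2 HU2'].
  destruct (vietoris_basic_nonempty _ _ bV2) as [V2 HV2'].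
  assert (Hpairs : forall p, In p (list_prod lU1 lV1 ++ list_prod lU2 lV2) ->
                      nonempty_open (fst p) /\ nonempty_open (snd p)).
  { intros [U V] Hp. apply in_app_or in Hp.
    destruct Hp as [Hp | Hp]; apply in_prod_iff in Hp; destruct Hp; split.
    - apply (vietoris_basic_nonempty_open lU1 K1); auto.
    - apply (vietoris_basic_nonempty_open lV1 L1); auto.
    - apply (vietoris_basic_nonempty_open lU2 K2); auto.
    - apply (vietoris_basic_nonempty_open lV2 L2); auto. }
  destruct (weakly_mixing_hits_list W _ Hpairs U1 V1) as [n [Hn [_ Hall]]].
  { apply (vietoris_basic_nonempty_open lU1 K1); auto. }
  { apply (vietoris_basic_nonempty_open lV1 L1); auto. }
  destruct (vietoris_basic_image_hits (F n) lU1 lV1 U1 V1) as [K [B1 B1']];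
    [auto | auto | intros U V HU HV;
      apply (Hall (U, V)), in_or_app; left; apply in_prod_iff; auto |].
  destruct (vietoris_basic_image_hits (F n) lU2 lV2 U2 V2) as [K' [B2 B2']];
    [auto | auto | intros U V HU HV;
      apply (Hall (U, V)), in_or_app; right; apply in_prod_iff; auto |].
  exists n; split; [auto | split].
  - exists K; split; [auto | rewrite comp_seq_hyper_map; auto].
  - exists K'; split; [auto | rewrite comp_seq_hyper_map; auto].
Qed.

Definition hits_two_targets : Prop :=
  forall U V1 V2, nonempty_open U -> nonempty_open V1 -> nonempty_open V2 ->
  exists n, (1 <= n)%nat /\ hits (F n) U V1 /\ hits (F n) U V2.

Lemma hyper_transitive_hits_two_targets :
  top_transitive (vietoris_open M) hyper_f -> hits_two_targets.
Proof.
  intros T U V1 V2 [HU [u Uu]] [HV1 [v1 V1v]] [HV2 [v2 V2v]].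
  destruct (T (vietoris_basic M (U :: nil)) (vietoris_basic M (V1 :: V2 :: nil)))
    as [n [Hn [K [[_ [HKU _]] HK']]]].
  - apply vietoris_open_basic. intros W [<- | []]; auto.
  - apply vietoris_open_basic. intros W [<- | [<- | []]]; auto.
  - exists (fun x => x = u).
    apply (vietoris_basic_finite _ _ (u :: nil)); [simpl; firstorder | eauto | |].
    + intros x ->. exists U; split; [left |]; auto.
    + intros W [<- | []]. exists u; auto.
  - exists (fun x => x = v1 \/ x = v2).
    apply (vietoris_basic_finite _ _ (v1 :: v2 :: nil)); [simpl; firstorder | eauto | |].
    + intros x [-> | ->]; [exists V1 | exists V2]; simpl; auto.
    + intros W [<- | [<- | []]]; [exists v1 | exists v2]; auto.
  - rewrite comp_seq_hyper_map in HK'. destruct HK' as [_ [_ Hhit]].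
    assert (HK_U : forall x, K x -> U x).
    { intros x Kx. destruct (HKU x Kx) as [W [[<- | []] Wx]]. exact Wx. }
    destruct (Hhit V1 (or_introl eq_refl)) as [y1 [[x1 [Kx1 <-]] Vy1]].
    destruct (Hhit V2 (or_intror (or_introl eq_refl))) as [y2 [[x2 [Kx2 <-]] Vy2]].
    exists n; split; [auto | split; [exists x1 | exists x2]; auto].
Qed.

(* Take m with U1 hitting both U2 and V2; then a common time n for the source
   U1 /\ F_m^{-1} U2 and the targets V1, F_m^{-1} V2 works, since the point
   F_m x lies in U2 and F_n (F_m x) = F_m (F_n x) lies in V2. *)
Lemma hits_two_targets_weakly_mixing :
  hits_two_targets -> weakly_mixing (mopen M) f.
Proof.
  intros H U1 U2 V1 V2 HU1 HU2 HV1 HV2 nU1 nU2 nV1 nV2.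
  destruct (H U1 U2 V2) as [m [_ [HU12 HU1V2]]]; try split; auto.
  destruct (H (fun x => U1 x /\ U2 (F m x)) V1 (fun x => V2 (F m x)))
    as [n [Hn [[x1 [[U1x1 _] V1x1]] [x2 [[_ U2x2] V2x2]]]]].
  - apply nonempty_open_pullback; auto. split; auto.
  - split; auto.
  - destruct HU1V2 as [b Hb]. split; [apply mopen_preimage; auto;
      apply comp_seq_continuous | exists b; apply Hb].
  - exists n; split; [auto | split; [exists x1; auto |]].
    exists (F m x2); split; [exact U2x2 |]. rewrite comp_seq_commute. exact V2x2.
Qed.

End Hyperspace.

Lemma weakly_mixing_top_transitive {Y : Type} (O : (Y -> Prop) -> Prop)
    (g : nat -> Y -> Y) :
  weakly_mixing O g -> top_transitive O g.
Proof.
  intros W U V HU HV nU nV.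
  destruct (W U U V V HU HU HV HV nU nU nV nV) as [n [Hn [H _]]]. eauto.
Qed.

Theorem theorem3p2 (M : Metric_Space) (f : nat -> Base M -> Base M) :
  compact_space M ->
  (forall i, continuous_map M (f i)) ->
  (forall i j x, f i (f j x) = f j (f i x)) ->
  (weakly_mixing (mopen M) f <->
     weakly_mixing (vietoris_open M) (fun i => hyper_map (f i))) /\
  (weakly_mixing (vietoris_open M) (fun i => hyper_map (f i)) <->
     top_transitive (vietoris_open M) (fun i => hyper_map (f i))).
Proof.
  intros _ Hf Hc.
  assert (transitive_weakly_mixing :
    top_transitive (vietoris_open M) (fun i => hyper_map (f i)) ->
    weakly_mixing (mopen M) f).
  { intros T. apply (hits_two_targets_weakly_mixing M f Hf Hc).
    exact (hyper_transitive_hits_two_targets M f T). }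
  pose proof (hyper_weakly_mixing M f Hf Hc).
  pose proof (weakly_mixing_top_transitive (vietoris_open M)
                (fun i => hyper_map (f i))).
  tauto.
Qed.
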